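(* Let $m\ge d\ge1$, $\lambda=d/m$, $p$ a polynomial of degree $d$ with nonnegative real roots and largest root $R$, and define on $\{(x,y):x,y>\sqrt R\}$ \[ F(x,y)=-\frac1{\sqrt{md}}\log\big[y^{m-d}p(xy)\big]. \] Then $F$ is convex, and for every $z>\sqrt R$, $\partial_xF(z,z)\,\partial_yF(z,z)=\mathcal H(z)$, where $\mathcal H(z)=\mathcal G(z)\big(\lambda\mathcal G(z)+\frac{1-\lambda}{z}\big)$ and $\mathcal G(z)=\frac1d\frac{zp'(z^2)}{p(z^2)}$.
   Context: $p(xy)>0$ when $x,y>\sqrt R$ (for $p$ with positive leading coefficient), so $F$ is well defined there. *)

From HB Require Import structures.
From mathcomp Require Import all_boot all_order all_algebra.
From mathcomp Require Import all_classical all_reals all_analysis.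
Set Implicit Arguments. Unset Strict Implicit. Unset Printing Implicit Defensive.
Import Order.TTheory GRing.Theory Num.Theory.
Local Open Scope ring_scope.

Definition Ffun (R : realType) (m d : nat) (p : {poly R}) (x y : R) : R :=
  - (Num.sqrt (m * d)%:R)^-1 * ln (y ^+ (m - d) * p.[x * y]).

Definition Gfun (R : realType) (d : nat) (p : {poly R}) (z : R) : R :=
  (d%:R)^-1 * (z * (p^`()).[z ^+ 2] / p.[z ^+ 2]).

Definition Hfun (R : realType) (m d : nat) (p : {poly R}) (z : R) : R :=
  let lam := d%:R / m%:R in
  Gfun d p z * (lam * Gfun d p z + (1 - lam) / z).

Definition Fdom (R : realType) (R0 : R) : set (R * R)%type :=
  [set xy | Num.sqrt R0 < xy.1 /\ Num.sqrt R0 < xy.2].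

(* Up to the factor -1/sqrt(md), F(x, y) is ln(lead p) + (m - d) ln y plus the
   sum of ln(xy - r) over the roots 0 <= r <= R < xy, so convexity of F reduces to
   concavity of (x, y) |-> ln(xy - r) on the positive quadrant.  Since ln is
   concave and increasing, it suffices that sqrt(xy - r) is concave there, which
   comes down to 2 sqrt((x0 y0 - r)(x1 y1 - r)) <= x0 y1 + x1 y0 - 2r.
   On the diagonal, -sqrt(md) dF/dx = d G(z) and -sqrt(md) dF/dy = (m - d)/z + d G(z),
   whose product divided by md is H(z). *)

From HB Require Import structures.
From mathcomp Require Import all_boot all_order all_algebra.
From mathcomp Require Import all_classical all_reals all_analysis.
From mathcomp Require Import ring lra.
Set Implicit Arguments. Unset Strict Implicit. Unset Printing Implicit Defensive.
Import Order.TTheory GRing.Theory Num.Theory.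
Local Open Scope ring_scope.

Section sqrt_mul_sub.
Variable R : rcfType.
Implicit Types (x y r : R).

Lemma sqrtr_lt_mul r x y : 0 <= r -> Num.sqrt r < x -> Num.sqrt r < y -> r < x * y.
Proof.
move=> r_ge0 ltx lty; rewrite -[r]sqr_sqrtr // expr2.
by rewrite ltr_pM ?sqrtr_ge0.
Qed.

Lemma mul_sub_discr_le (x0 y0 x1 y1 r : R) : 0 <= r -> r <= x0 * y0 ->
  4 * (x0 * y0 - r) * (x1 * y1 - r) <= (x0 * y1 + x1 * y0 - 2 * r) ^+ 2.
Proof.
move=> r_ge0 r_le; rewrite -subr_ge0.
have [k_ge0|k_lt0] := lerP 0 ((x0 - x1) * (y0 - y1)).
  have -> : (x0 * y1 + x1 * y0 - 2 * r) ^+ 2 - 4 * (x0 * y0 - r) * (x1 * y1 - r)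
      = (x0 * y1 - x1 * y0) ^+ 2 + 4 * r * ((x0 - x1) * (y0 - y1)) by ring.
  by rewrite addr_ge0 ?sqr_ge0 // mulr_ge0 // mulr_ge0.
have -> : (x0 * y1 + x1 * y0 - 2 * r) ^+ 2 - 4 * (x0 * y0 - r) * (x1 * y1 - r)
    = (x0 * y1 + x1 * y0 - 2 * (x0 * y0)) ^+ 2
      + 4 * (x0 * y0 - r) * - ((x0 - x1) * (y0 - y1)) by ring.
by rewrite addr_ge0 ?sqr_ge0 // mulr_ge0 ?oppr_ge0 ?(ltW k_lt0) // mulr_ge0 ?subr_ge0.
Qed.

Lemma sqrt_mul_sub_le (x0 y0 x1 y1 r : R) : 0 <= r -> r <= x0 * y0 -> r <= x1 * y1 ->
  0 <= x0 -> 0 <= y0 -> 0 <= x1 -> 0 <= y1 ->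
  2 * Num.sqrt (x0 * y0 - r) * Num.sqrt (x1 * y1 - r) <= x0 * y1 + x1 * y0 - 2 * r.
Proof.
move=> r_ge0 r_le0 r_le1 x0_ge0 y0_ge0 x1_ge0 y1_ge0.
have cross_ge0 : 0 <= x0 * y1 + x1 * y0 - 2 * r.
  have : r * r <= (x0 * y1) * (x1 * y0).
    have -> : x0 * y1 * (x1 * y0) = x0 * y0 * (x1 * y1) by ring.
    exact: ler_pM.
  have := sqr_ge0 (x0 * y1 - x1 * y0).
  have : 0 <= x0 * y1 by exact: mulr_ge0.
  have : 0 <= x1 * y0 by exact: mulr_ge0.
  nra.
rewrite -(ler_pXn2r (n := 2)) ?nnegrE ?mulr_ge0 ?sqrtr_ge0 //.
rewrite !exprMn !sqr_sqrtr ?subr_ge0 //.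
by rewrite -natrX; apply: mul_sub_discr_le.
Qed.

Lemma sqrt_mul_sub_concave (x0 y0 x1 y1 r t : R) :
  0 <= r -> r <= x0 * y0 -> r <= x1 * y1 ->
  0 <= x0 -> 0 <= y0 -> 0 <= x1 -> 0 <= y1 -> 0 <= t <= 1 ->
  (t * Num.sqrt (x0 * y0 - r) + (1 - t) * Num.sqrt (x1 * y1 - r)) ^+ 2 <=
  (t * x0 + (1 - t) * x1) * (t * y0 + (1 - t) * y1) - r.
Proof.
move=> r_ge0 r_le0 r_le1 x0_ge0 y0_ge0 x1_ge0 y1_ge0 /andP[t_ge0 t_le1].
set s0 := Num.sqrt (x0 * y0 - r); set s1 := Num.sqrt (x1 * y1 - r).
have s_le : 2 * s0 * s1 <= x0 * y1 + x1 * y0 - 2 * r by exact: sqrt_mul_sub_le.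
have e0 : s0 ^+ 2 = x0 * y0 - r by rewrite sqr_sqrtr ?subr_ge0.
have e1 : s1 ^+ 2 = x1 * y1 - r by rewrite sqr_sqrtr ?subr_ge0.
rewrite -subr_ge0.
have -> : (t * x0 + (1 - t) * x1) * (t * y0 + (1 - t) * y1) - r
          - (t * s0 + (1 - t) * s1) ^+ 2
        = t * (1 - t) * (x0 * y1 + x1 * y0 - 2 * r - 2 * s0 * s1).
  by rewrite sqrrD !exprMn e0 e1; ring.
by rewrite !mulr_ge0 ?subr_ge0.
Qed.

End sqrt_mul_sub.

Section ln_concave.
Variable R : realType.

Lemma ln_conv_ge (t : {i01 R}) (a b : R) : 0 < a -> 0 < b ->
  t%:inum * ln a + (1 - t%:inum) * ln b <= ln (t%:inum * a + (1 - t%:inum) * b).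
Proof. by move=> a_gt0 b_gt0; have := concave_ln t a_gt0 b_gt0; rewrite !convRE. Qed.

Lemma conv_mul_gt (t : {i01 R}) (x0 y0 x1 y1 r : R) :
  0 <= r -> r < x0 * y0 -> r < x1 * y1 ->
  0 < x0 -> 0 < y0 -> 0 < x1 -> 0 < y1 ->
  r < (t%:inum * x0 + (1 - t%:inum) * x1) * (t%:inum * y0 + (1 - t%:inum) * y1).
Proof.
move=> r_ge0 r_lt0 r_lt1 x0_gt0 y0_gt0 x1_gt0 y1_gt0; rewrite -subr_gt0.
have s0_gt0 : 0 < Num.sqrt (x0 * y0 - r) by rewrite sqrtr_gt0 subr_gt0.
have s1_gt0 : 0 < Num.sqrt (x1 * y1 - r) by rewrite sqrtr_gt0 subr_gt0.
have := convR_gt0 t s0_gt0 s1_gt0; rewrite convRE => /(exprn_gt0 2) /lt_le_trans-> //.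
by apply: sqrt_mul_sub_concave; rewrite ?ge0 ?le1 //; exact: ltW.
Qed.

Lemma ln_mul_sub_concave (t : {i01 R}) (x0 y0 x1 y1 r : R) :
  0 <= r -> r < x0 * y0 -> r < x1 * y1 ->
  0 < x0 -> 0 < y0 -> 0 < x1 -> 0 < y1 ->
  t%:inum * ln (x0 * y0 - r) + (1 - t%:inum) * ln (x1 * y1 - r) <=
  ln ((t%:inum * x0 + (1 - t%:inum) * x1) * (t%:inum * y0 + (1 - t%:inum) * y1) - r).
Proof.
move=> r_ge0 r_lt0 r_lt1 x0_gt0 y0_gt0 x1_gt0 y1_gt0.
set u := t%:inum.
set s0 := Num.sqrt (x0 * y0 - r); set s1 := Num.sqrt (x1 * y1 - r).
have [s0_gt0 s1_gt0] : 0 < s0 /\ 0 < s1 by rewrite !sqrtr_gt0 !subr_gt0.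
have -> : x0 * y0 - r = s0 ^+ 2 by rewrite sqr_sqrtr // subr_ge0 ltW.
have -> : x1 * y1 - r = s1 ^+ 2 by rewrite sqr_sqrtr // subr_ge0 ltW.
have s_conv_gt0 : 0 < u * s0 + (1 - u) * s1.
  by have := convR_gt0 t s0_gt0 s1_gt0; rewrite convRE.
have s_conv_le : (u * s0 + (1 - u) * s1) ^+ 2 <=
    (u * x0 + (1 - u) * x1) * (u * y0 + (1 - u) * y1) - r.
  by apply: sqrt_mul_sub_concave; rewrite /u ?ge0 ?le1 //; exact: ltW.
have ln_le : u * ln s0 + (1 - u) * ln s1 <= ln (u * s0 + (1 - u) * s1).
  exact: ln_conv_ge.
have ln_sqr_le : ln ((u * s0 + (1 - u) * s1) ^+ 2) <=
    ln ((u * x0 + (1 - u) * x1) * (u * y0 + (1 - u) * y1) - r).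
  by rewrite ler_ln ?posrE ?exprn_gt0 // (lt_le_trans _ s_conv_le) ?exprn_gt0.
apply: le_trans ln_sqr_le; rewrite !lnXn // !mulr2n; lra.
Qed.

End ln_concave.

Lemma ln_prod (R : realType) (I : eqType) (s : seq I) (F : I -> R) :
  {in s, forall i, 0 < F i} -> ln (\prod_(i <- s) F i) = \sum_(i <- s) ln (F i).
Proof.
move=> F_gt0; rewrite big_seq [RHS]big_seq.
apply: (@big_morph_in _ _ Num.pos) => //.
- by move=> a b a_gt0 b_gt0; rewrite posrE mulr_gt0.
- by rewrite posrE ltr01.
- exact: lnM.
- exact: ln1.
Qed.

Section rooted_poly.
Variables (R : realType) (p : {poly R}) (rs : seq R).
Hypothesis lead_gt0 : 0 < lead_coef p.
Hypothesis p_factor : p = lead_coef p *: \prod_(r <- rs) ('X - r%:P).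
Hypothesis roots_ge0 : {in rs, forall r, 0 <= r}.

Lemma horner_factor w : p.[w] = lead_coef p * \prod_(r <- rs) (w - r).
Proof.
rewrite {1}p_factor hornerZ horner_prod; congr (_ * _).
by apply: eq_bigr => r _; rewrite hornerXsubC.
Qed.

Lemma horner_factor_gt0 w : {in rs, forall r, r < w} -> 0 < p.[w].
Proof.
move=> rs_lt; rewrite horner_factor mulr_gt0 // big_seq prodr_gt0 // => r /rs_lt.
by rewrite subr_gt0.
Qed.

Lemma ln_horner_factor w : {in rs, forall r, r < w} ->
  ln p.[w] = ln (lead_coef p) + \sum_(r <- rs) ln (w - r).
Proof.
move=> rs_lt; have sub_gt0 : {in rs, forall r, 0 < w - r}.
  by move=> r /rs_lt; rewrite subr_gt0.
by rewrite horner_factor lnM ?posrE ?ln_prod // big_seq prodr_gt0.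
Qed.

Lemma roots_lt_conv_mul (t : {i01 R}) (x0 y0 x1 y1 : R) :
  0 < x0 -> 0 < y0 -> 0 < x1 -> 0 < y1 ->
  {in rs, forall r, r < x0 * y0} -> {in rs, forall r, r < x1 * y1} ->
  {in rs, forall r,
    r < (t%:inum * x0 + (1 - t%:inum) * x1) * (t%:inum * y0 + (1 - t%:inum) * y1)}.
Proof.
move=> x0_gt0 y0_gt0 x1_gt0 y1_gt0 rs_lt0 rs_lt1 r r_rs.
by apply: conv_mul_gt => //; [exact: roots_ge0 | exact: rs_lt0 | exact: rs_lt1].
Qed.

Lemma ln_horner_mul_concave (t : {i01 R}) (x0 y0 x1 y1 : R) :
  0 < x0 -> 0 < y0 -> 0 < x1 -> 0 < y1 ->
  {in rs, forall r, r < x0 * y0} -> {in rs, forall r, r < x1 * y1} ->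
  t%:inum * ln p.[x0 * y0] + (1 - t%:inum) * ln p.[x1 * y1] <=
  ln p.[(t%:inum * x0 + (1 - t%:inum) * x1) * (t%:inum * y0 + (1 - t%:inum) * y1)].
Proof.
move=> x0_gt0 y0_gt0 x1_gt0 y1_gt0 rs_lt0 rs_lt1.
have rs_lt := roots_lt_conv_mul t x0_gt0 y0_gt0 x1_gt0 y1_gt0 rs_lt0 rs_lt1.
rewrite !ln_horner_factor //.
rewrite mulrDr mulrDr addrACA -mulrDl subrKC mul1r lerD2l !mulr_sumr -big_split /=.
rewrite big_seq [leRHS]big_seq; apply: ler_sum => r r_rs.
by apply: ln_mul_sub_concave => //; [exact: roots_ge0 | exact: rs_lt0 | exact: rs_lt1].
Qed.

Lemma ln_Ffun_arg_concave (n : nat) (t : {i01 R}) (x0 y0 x1 y1 : R) :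
  0 < x0 -> 0 < y0 -> 0 < x1 -> 0 < y1 ->
  {in rs, forall r, r < x0 * y0} -> {in rs, forall r, r < x1 * y1} ->
  t%:inum * ln (y0 ^+ n * p.[x0 * y0]) + (1 - t%:inum) * ln (y1 ^+ n * p.[x1 * y1])
  <= ln ((t%:inum * y0 + (1 - t%:inum) * y1) ^+ n *
         p.[(t%:inum * x0 + (1 - t%:inum) * x1) * (t%:inum * y0 + (1 - t%:inum) * y1)]).
Proof.
move=> x0_gt0 y0_gt0 x1_gt0 y1_gt0 rs_lt0 rs_lt1.
have rs_lt := roots_lt_conv_mul t x0_gt0 y0_gt0 x1_gt0 y1_gt0 rs_lt0 rs_lt1.
set u := t%:inum; set xt := u * x0 + _; set yt := u * y0 + _ in rs_lt *.
have yt_gt0 : 0 < yt by have := convR_gt0 t y0_gt0 y1_gt0; rewrite convRE.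
rewrite !lnM ?posrE ?exprn_gt0 ?horner_factor_gt0 //; rewrite !lnXn //.
have ln_y := ln_conv_ge t y0_gt0 y1_gt0.
have ln_p := ln_horner_mul_concave t x0_gt0 y0_gt0 x1_gt0 y1_gt0 rs_lt0 rs_lt1.
rewrite [u * _]mulrDr [(1 - u) * _]mulrDr addrACA !mulrnAr -mulrnDl.
by apply: lerD => //; exact: (ler_wMn2r n ln_y).
Qed.

Lemma Ffun_convex (m d : nat) (R0 : R) : 0 <= R0 -> {in rs, forall r, r <= R0} ->
  convex_function (Fdom R0) (fun xy : (R * R)%type => Ffun m d p xy.1 xy.2).
Proof.
move=> R0_ge0 rs_le t [x0 y0] [x1 y1]; rewrite !inE /Fdom /= => -[ltx0 lty0] [ltx1 lty1].
have pos x : Num.sqrt R0 < x -> 0 < x by apply: le_lt_trans; exact: sqrtr_ge0.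
have rs_lt x y : Num.sqrt R0 < x -> Num.sqrt R0 < y -> {in rs, forall r, r < x * y}.
  by move=> ltx lty r /rs_le/le_lt_trans; apply; exact: sqrtr_lt_mul.
rewrite convRE /Ffun /= mulrCA [X in _ <= _ + X]mulrCA -mulrDr !mulNr lerN2.
apply: ler_wpM2l; first by rewrite invr_ge0 sqrtr_ge0.
exact: (ln_Ffun_arg_concave (m - d) t (pos _ ltx0) (pos _ lty0) (pos _ ltx1) (pos _ lty1)
  (rs_lt _ _ ltx0 lty0) (rs_lt _ _ ltx1 lty1)).
Qed.

End rooted_poly.

Lemma is_derive_ln_horner (R : realType) (q : {poly R}) (x : R) : 0 < q.[x] ->
  is_derive x 1 (fun y => ln q.[y]) (q^`().[x] / q.[x]).
Proof.
move=> q_gt0; apply: trigger_derive.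
  exact: (is_derive1_comp (is_derive1_ln q_gt0) (is_derive_poly q x)).
by rewrite mulrC.
Qed.

Section Ffun_partials.
Variables (R : realType) (m d : nat) (p : {poly R}).
Local Notation c := (Num.sqrt (m * d)%:R)^-1.

Lemma is_derive_Ffun_x (x y : R) : 0 < y -> 0 < p.[x * y] ->
  is_derive x 1 (fun x => Ffun m d p x y) (- c * (y * p^`().[x * y] / p.[x * y])).
Proof.
move=> y_gt0 p_gt0.
pose q := y ^+ (m - d) *: (p \Po ('X * y%:P)).
have qE z : q.[z] = y ^+ (m - d) * p.[z * y] by rewrite hornerZ horner_comp !hornerE.
have -> : (fun x => Ffun m d p x y) = (- c) \*: (fun z => ln q.[z]).
  by apply/funext => z; rewrite /= qE.
have q'E : q^`().[x] = y ^+ (m - d) * (p^`().[x * y] * y).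
  by rewrite derivZ deriv_comp hornerZ hornerM horner_comp derivM derivX derivC !hornerE.
apply: trigger_derive.
  by apply/is_deriveZ/is_derive_ln_horner; rewrite qE mulr_gt0 ?exprn_gt0.
have yn_neq0 : y ^+ (m - d) != 0 by rewrite expf_neq0 ?gt_eqF.
have p_neq0 : p.[x * y] != 0 by rewrite gt_eqF.
change (- c * (q^`().[x] / q.[x]) = - c * (y * p^`().[x * y] / p.[x * y])).
rewrite qE q'E; congr (_ * _); move: (y ^+ _) yn_neq0 => Y Y_neq0.
by field; rewrite p_neq0 Y_neq0.
Qed.

Lemma is_derive_Ffun_y (x y : R) : 0 < y -> 0 < p.[x * y] ->
  is_derive y 1 (fun y => Ffun m d p x y)
    (- c * ((m - d)%:R / y + x * p^`().[x * y] / p.[x * y])).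
Proof.
move=> y_gt0 p_gt0.
pose q := 'X^(m - d) * (p \Po (x%:P * 'X)).
have qE z : q.[z] = z ^+ (m - d) * p.[x * z] by rewrite hornerM horner_comp !hornerE.
have -> : (fun y => Ffun m d p x y) = (- c) \*: (fun z => ln q.[z]).
  by apply/funext => z; rewrite /= qE.
have q'E : q^`().[y] =
    (m - d)%:R * y ^+ (m - d).-1 * p.[x * y] + y ^+ (m - d) * (p^`().[x * y] * x).
  rewrite derivM derivXn deriv_comp hornerD !hornerM hornerMn hornerXn !horner_comp.
  rewrite derivM derivX derivC mul0r add0r mulr1 hornerC hornerCM hornerX hornerXn.
  by rewrite mulr_natl.
apply: trigger_derive.
  by apply/is_deriveZ/is_derive_ln_horner; rewrite qE mulr_gt0 ?exprn_gt0.
have p_neq0 : p.[x * y] != 0 by rewrite gt_eqF.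
have y_neq0 : y != 0 by rewrite gt_eqF.
change (- c * (q^`().[y] / q.[y]) =
  - c * ((m - d)%:R / y + x * p^`().[x * y] / p.[x * y])).
rewrite qE q'E; congr (_ * _); case: (m - d)%N => [|n].
  by rewrite !expr0 !mul0r add0r !mul1r; field.
rewrite exprS /=; have yn_neq0 := expf_neq0 n y_neq0; move: (y ^+ n) yn_neq0 => Y Y_neq0.
by field; rewrite p_neq0 Y_neq0 y_neq0.
Qed.

Lemma Ffun_partials_mul_diag (z : R) : (0 < d)%N -> (d <= m)%N ->
  z != 0 -> p.[z * z] != 0 ->
  (- c * (z * p^`().[z * z] / p.[z * z])) *
  (- c * ((m - d)%:R / z + z * p^`().[z * z] / p.[z * z])) = Hfun m d p z.
Proof.
move=> d_gt0 d_le_m z_neq0 p_neq0.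
have c2 : (Num.sqrt (m * d)%:R)^-1 ^+ 2 = (m%:R * d%:R)^-1 :> R.
  by rewrite exprVn sqr_sqrtr // natrM.
have m_neq0 : m%:R != 0 :> R by rewrite pnatr_eq0 -lt0n (leq_trans d_gt0 d_le_m).
have d_neq0 : d%:R != 0 :> R by rewrite pnatr_eq0 -lt0n.
rewrite /Hfun /Gfun expr2 mulrACA mulrNN -expr2 c2 natrB //.
by field; rewrite p_neq0 z_neq0 m_neq0 d_neq0.
Qed.

End Ffun_partials.

Theorem mainTheorem17 (R : realType) (m d : nat) (p : {poly R}) (R0 : R) :
  (1 <= d)%N -> (d <= m)%N ->
  size p = d.+1 ->
  0 < lead_coef p ->
  (exists rs : seq R, size rs = d /\ all (fun r => 0 <= r) rs /\
     p = lead_coef p *: \prod_(r <- rs) ('X - r%:P)) ->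
  root p R0 -> (forall r : R, root p r -> r <= R0) ->
  convex_function (Fdom R0) (fun xy : (R * R)%type => Ffun m d p xy.1 xy.2)
  /\ (forall z : R, Num.sqrt R0 < z ->
        exists a b : R,
          is_derive z 1 (fun x : R => Ffun m d p x z) a /\
          is_derive z 1 (fun y : R => Ffun m d p z y) b /\
          a * b = Hfun m d p z).
Proof.
move=> d_gt0 d_le_m _ lead_gt0 [rs [_ [/allP roots_ge0 p_factor]]] R0_root R0_max.
have root_rs x : root p x = (x \in rs).
  by rewrite {1}p_factor rootZ ?root_prod_XsubC ?lt0r_neq0.
have roots_le : {in rs, forall r, r <= R0} by move=> r; rewrite -root_rs; exact: R0_max.
have R0_ge0 : 0 <= R0 by apply: roots_ge0; rewrite -root_rs.
split; first exact: (Ffun_convex lead_gt0 p_factor roots_ge0 m d R0_ge0 roots_le).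
move=> z ltz; have z_gt0 : 0 < z by apply: le_lt_trans ltz; exact: sqrtr_ge0.
have p_gt0 : 0 < p.[z * z].
  apply: (horner_factor_gt0 lead_gt0 p_factor) => r /roots_le/le_lt_trans; apply.
  exact: sqrtr_lt_mul.
do 2 eexists; split; first exact: is_derive_Ffun_x.
split; first exact: is_derive_Ffun_y.
by apply: Ffun_partials_mul_diag; rewrite ?gt_eqF.
Qed.
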